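(* Assume $p,q\in[0,1]$. Let $n\ge3$. If $v\in I_n$ has $k^{(r)}_v>0$, then there exists $u\in\alpha_3(v)$ and there exist $\tilde a,\tilde b,\tilde c,\tilde d$ with $\tilde a\overset m\sim\tilde b$, $\tilde c\overset m\sim\tilde d$ and $u\in\tilde\alpha(\tilde a)\cap\tilde\alpha(\tilde b)\cap\tilde\alpha(\tilde c)\cap\tilde\alpha(\tilde d)$, such that either $\tilde a,\tilde b,\tilde c,\tilde d\in\tilde I_n$ with $\tilde a,\tilde b,\tilde d$ distinct, or $\tilde a,\tilde b\in\tilde I_{n-1}$ and $\tilde c,\tilde d\in\tilde I_n$.
   Context: Ulam–Harris labels: $\mathcal U_n=\mathbb N^n$ ($n\ge0$, $\mathcal U_0=\{\emptyset\}$), $\mathcal U=\bigcup_{n\ge0}\mathcal U_n$; for $u=u_1\dots u_k$ write $ui=u_1\dots u_ki$. Let $(\xi_u)_{u\in\mathcal U}$ be i.i.d. Poisson with mean $1+p$, and $(\delta_{u,v})_{u,v\in\mathcal U}$, $(\mu_{\{u,v\}})_{u\ne v\in\mathcal U}$ i.i.d. Bernoulli with mean $q$, all independent. The process $\mathcal G(p,q)=(G_n)_{n\ge0}$, $G_n=(V_n,E_n)$: $G_0=(\{\emptyset\},\emptyset)$, and $I_m=V_m\cap\mathcal U_m$. Given $G_{n-1}$ ($n\ge1$): (1) for $u\in I_{n-1}$ let $\mathcal K_u=\{v\in V_{n-1}:d_{G_{n-1}}(u,v)=3\}$ and $\mathcal C_u=\{j\in\mathbb N:j\le\xi_u,\ \delta_{v,uj}=0\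 \forall v\in\mathcal K_u\}$; let $\tilde G_n$ have vertex set $V_{n-1}\cup\{ui:u\in I_{n-1},i\in\mathcal C_u\}$ and edge set $E_{n-1}\cup\{\{u,ui\}:u\in I_{n-1},i\in\mathcal C_u\}$, and $\tilde I_n$ its set of vertices in $\mathcal U_n$. (2) For $u,v\in\tilde I_n$ write $u\overset{m}{\sim}v$ iff $d_{\tilde G_n}(u,v)=4$ and $\mu_{\{u,v\}}=1$; let $\sim$ be the equivalence relation on $\tilde I_n$ generated by $\overset m\sim$, and $\pi(u)$ the lexicographically smallest element of the class of $u$. Then $V_n=V_{n-1}\cup\{\pi(u):u\in\tilde I_n\}$, $E_n=E_{n-1}\cup\{\{v,\pi(vi)\}:v\in I_{n-1},i\in\mathcal C_v\}$. (The relation $\overset m\sim$ is defined on each $\tilde I_m$, $m\ge1$, separately.) For $x\in I_n$, $\alpha(x)=\bigcup_{0\le j\le n}\{y\in I_{n-j}:d_{G_n}(y,x)=j\}$ and $\alpha_i(x)=\alpha(x)\cap I_{n-i}$. For $\tilde x\in\tilde I_m$, $\tilde\alpha(\tilde x)=\{\tilde x\}\cup\bigcup_{1\le j\le m}\{y\in I_{m-j}:d_{\tilde G_m}(y,\tilde x)=j\}$. For $x\in I_n$, $k^{(r)}_x=|\{y\in I_{n-1}:\alpha_1(y)\cap\alpha_2(x)=\emptyset,\ d_{G_n}(x,y)=3\}|$. *)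

(* Deterministic description of the process G(p,q), given an
   arbitrary realisation of the random variables xi, delta, mu. *)
From Stdlib Require Import Reals Arith List Relations.
Import ListNotations.

(* Ulam-Harris labels: u = u_1 ... u_k as a list of naturals; ui = u ++ [i]. *)
Definition lab := list nat.

(* A graph with (possibly infinite-described, but here finite) vertex and edge
   predicates; the edge relation is kept symmetric by construction. *)
Record graph := mkGraph { gV : lab -> Prop; gE : lab -> lab -> Prop }.

Fixpoint walk (E : lab -> lab -> Prop) (k : nat) (u v : lab) : Prop :=
  match k with
  | 0 => u = v
  | S k' => exists w, E u w /\ walk E k' w v
  end.

Definition dist (G : graph) (u v : lab) (m : nat) : Prop :=
  walk (gE G) m u v /\ forall k, k < m -> ~ walk (gE G) k u v.

Definition lvl (G : graph) (m : nat) (x : lab) : Prop := gV G x /\ length x = m.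

Fixpoint lex_le (s t : lab) : bool :=
  match s, t with
  | [], _ => true
  | _ :: _, [] => false
  | a :: s', b :: t' => Nat.ltb a b || (Nat.eqb a b && lex_le s' t')
  end.

Definition Cset (xi : lab -> nat) (delta : lab -> lab -> bool)
  (G : graph) (u : lab) (i : nat) : Prop :=
  1 <= i <= xi u /\
  forall v, gV G v -> dist G u v 3 -> delta v (u ++ [i]) = false.

(* \tilde G_{m+1} built from G = G_m *)
Definition tilde (xi : lab -> nat) (delta : lab -> lab -> bool)
  (G : graph) (m : nat) : graph :=
  mkGraph
    (fun x => gV G x \/ exists u i, lvl G m u /\ Cset xi delta G u i /\ x = u ++ [i])
    (fun x y => gE G x y \/
       exists u i, lvl G m u /\ Cset xi delta G u i /\
         ((x = u /\ y = u ++ [i]) \/ (x = u ++ [i] /\ y = u))).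

Definition msimG (mu : lab -> lab -> bool) (Gt : graph) (n : nat) (a b : lab) : Prop :=
  lvl Gt n a /\ lvl Gt n b /\ dist Gt a b 4 /\ mu a b = true.

Definition is_pi (mu : lab -> lab -> bool) (Gt : graph) (n : nat) (u w : lab) : Prop :=
  clos_refl_sym_trans lab (msimG mu Gt n) u w /\
  forall w', clos_refl_sym_trans lab (msimG mu Gt n) u w' -> lex_le w w' = true.

(* G_n from G = G_{n-1}, Gt = \tilde G_n *)
Definition final (xi : lab -> nat) (delta : lab -> lab -> bool) (mu : lab -> lab -> bool)
  (G Gt : graph) (n : nat) : graph :=
  mkGraph
    (fun x => gV G x \/ exists u, lvl Gt n u /\ is_pi mu Gt n u x)
    (fun x y => gE G x y \/
       exists v i w, lvl G (n - 1) v /\ Cset xi delta G v i /\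
         is_pi mu Gt n (v ++ [i]) w /\ ((x = v /\ y = w) \/ (x = w /\ y = v))).

Fixpoint proc xi delta mu (n : nat) : graph :=
  match n with
  | 0 => mkGraph (fun x => x = []) (fun _ _ => False)
  | S m => final xi delta mu (proc xi delta mu m) (tilde xi delta (proc xi delta mu m) m) (S m)
  end.

(* \tilde G_n (meaningful for n >= 1) *)
Definition Gtil xi delta mu (n : nat) : graph :=
  tilde xi delta (proc xi delta mu (n - 1)) (n - 1).

Definition Iset xi delta mu (n : nat) (x : lab) : Prop := lvl (proc xi delta mu n) n x.
Definition Itil xi delta mu (n : nat) (x : lab) : Prop := lvl (Gtil xi delta mu n) n x.

Definition msim xi delta mu (n : nat) (a b : lab) : Prop :=
  msimG mu (Gtil xi delta mu n) n a b.

Definition alpha xi delta mu (n i : nat) (x y : lab) : Prop :=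
  Iset xi delta mu (n - i) y /\ dist (proc xi delta mu n) y x i.

Definition atilde xi delta mu (m : nat) (x y : lab) : Prop :=
  y = x \/ exists j, 1 <= j <= m /\ Iset xi delta mu (m - j) y /\
                     dist (Gtil xi delta mu m) y x j.

Definition kr_set xi delta mu (n : nat) (x y : lab) : Prop :=
  Iset xi delta mu (n - 1) y /\
  (forall z, ~ (alpha xi delta mu (n - 1) 1 y z /\ alpha xi delta mu n 2 x z)) /\
  dist (proc xi delta mu n) x y 3.

From Pilot Require Import Defs.
From Stdlib Require Import Reals Arith List Relations Lia Classical.
Import ListNotations.

(* Let v - x1 - x2 - y be a geodesic witnessing k^(r)_v > 0.  As v has no
   neighbour above level n and alpha_1(y) meets no point of alpha_2(v), x2 lies
   in I_n and is a common child of x1 and y, so x1 i ~ y j for some i, j.  Along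
   a chain of m-steps from x1 i to y j, some step c ~m d leaves the vertices all
   of whose grandparents lie in alpha_2(v).  Distance 4 in tilde G_n forces the
   parents of c and d to share a parent g, which lies in alpha_2(v), while the
   parent of d has a second parent outside alpha_2(v).  A vertex of level n-1
   with two parents comes from a merge a ~m b in tilde G_(n-1) with a child of g,
   and a, b have a common grandparent h adjacent to g; then u = h and
   (a, b, c, d) satisfy the second alternative. *)

Definition graded (E : lab -> lab -> Prop) : Prop :=
  forall x y, E x y -> length y = S (length x) \/ length x = S (length y).

Lemma walk_length_bound E k x y :
  graded E -> walk E k x y -> length y <= length x + k /\ length x <= length y + k.
Proof.
  intros HE. revert x. induction k as [|k IH]; intros x W.
  - simpl in W. subst. lia.
  - destruct W as (w & Exw & W). apply IH in W. apply HE in Exw. lia.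
Qed.

Lemma dist_of_walk G k x y :
  graded (gE G) -> walk (gE G) k x y -> length y = length x + k -> Defs.dist G x y k.
Proof.
  intros HE W L. split; [exact W|]. intros k' Hk' W'.
  apply (walk_length_bound _ _ _ _ HE) in W'. lia.
Qed.

Lemma clos_rst_crossing (A : Type) (R : relation A) (P : A -> Prop) x z :
  clos_refl_sym_trans A R x z -> P x -> ~ P z ->
  exists a b, R a b /\ (P a /\ ~ P b \/ P b /\ ~ P a).
Proof.
  intros H. apply clos_rst_rst1n in H.
  induction H as [x | x y z Rxy _ IH]; intros Px Nz; [contradiction|].
  destruct (classic (P y)) as [Py | Ny]; [now apply IH|].
  destruct Rxy as [Rxy | Ryx]; [exists x, y | exists y, x]; tauto.
Qed.

Lemma clos_rst_first_step (A : Type) (R : relation A) x z :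
  clos_refl_sym_trans A R x z -> x <> z -> exists b, R x b \/ R b x.
Proof.
  intros H Hne. apply clos_rst_rst1n in H.
  destruct H as [| y z Rxy _]; [contradiction | eauto].
Qed.

Section Process.

Variables (xi : lab -> nat) (delta mu : lab -> lab -> bool).

Local Notation G := (proc xi delta mu).
(* [TG m] is tilde G_(m+1): the graph G_m with the children of its level m. *)
Local Notation TG m := (tilde xi delta (proc xi delta mu m) m).

Definition tilde_child (m : nat) (p c : lab) : Prop :=
  lvl (G m) m p /\ exists i, Cset xi delta (G m) p i /\ c = p ++ [i].

Definition tilde_grandchild (m : nat) (g c : lab) : Prop :=
  exists p, tilde_child m p c /\ gE (G m) g p.

Lemma msim_closure_lvl Gt n u w :
  clos_refl_sym_trans lab (msimG mu Gt n) u w -> lvl Gt n u -> lvl Gt n w.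
Proof.
  intros H. enough (lvl Gt n u <-> lvl Gt n w) by tauto.
  induction H as [x y (Hx & Hy & _) | | |]; tauto.
Qed.

Lemma is_pi_lvl Gt n u w : is_pi mu Gt n u w -> lvl Gt n u -> lvl Gt n w.
Proof. intros [H _]. exact (msim_closure_lvl _ _ _ _ H). Qed.

Lemma tilde_child_lvl m p c : tilde_child m p c -> lvl (TG m) (S m) c.
Proof.
  intros (Hp & i & Hi & ->). split.
  - right. exists p, i. auto.
  - rewrite length_app. destruct Hp as [_ Lp]. simpl. lia.
Qed.

Lemma pi_child_lvl m p c w :
  tilde_child m p c -> is_pi mu (TG m) (S m) c w -> lvl (TG m) (S m) w.
Proof. intros Hc Hpi. exact (is_pi_lvl _ _ _ _ Hpi (tilde_child_lvl _ _ _ Hc)). Qed.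

Lemma tilde_child_removelast m p c : tilde_child m p c -> removelast c = p.
Proof. intros (_ & i & _ & ->). apply removelast_last. Qed.

Lemma tilde_child_edge m p c : tilde_child m p c -> gE (TG m) p c.
Proof. intros (Hp & i & Hi & ->). right. exists p, i. auto. Qed.

Lemma proc_succ_vertex m x :
  gV (G (S m)) x <->
  gV (G m) x \/ exists u, lvl (TG m) (S m) u /\ is_pi mu (TG m) (S m) u x.
Proof. reflexivity. Qed.

Lemma proc_succ_edge m x y :
  gE (G (S m)) x y <-> gE (G m) x y \/
    exists p c w, tilde_child m p c /\ is_pi mu (TG m) (S m) c w /\
      (x = p /\ y = w \/ x = w /\ y = p).
Proof.
  simpl. rewrite Nat.sub_0_r. unfold tilde_child. split.
  - intros [H | (p & i & w & Hp & Hi & Hw & Hxy)]; [now left | right].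
    exists p, (p ++ [i]), w. split; [split; eauto | auto].
  - intros [H | (p & c & w & (Hp & i & Hi & ->) & Hw & Hxy)]; [now left | right].
    exists p, i, w. auto.
Qed.

Lemma proc_vertex_length m x : gV (G m) x -> length x <= m.
Proof.
  revert x. induction m as [|m IH]; intros x Hx.
  - simpl in Hx. subst. simpl. lia.
  - apply proc_succ_vertex in Hx. destruct Hx as [Hx | (u & Hu & Hpi)].
    + apply IH in Hx. lia.
    + destruct (is_pi_lvl _ _ _ _ Hpi Hu) as [_ L]. lia.
Qed.

Lemma proc_edge_vertices m x y : gE (G m) x y -> gV (G m) x /\ gV (G m) y.
Proof.
  induction m as [|m IH]; [simpl; tauto|].
  rewrite proc_succ_edge, !proc_succ_vertex.
  intros [H | (p & c & w & Hc & Hpi & Hxy)]; [apply IH in H; tauto|].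
  assert (Hp : gV (G m) p) by apply Hc.
  assert (Hw : exists u, lvl (TG m) (S m) u /\ is_pi mu (TG m) (S m) u w)
    by (exists c; split; [exact (tilde_child_lvl _ _ _ Hc) | exact Hpi]).
  destruct Hxy as [[-> ->] | [-> ->]]; auto.
Qed.

Lemma proc_graded m : graded (gE (G m)).
Proof.
  induction m as [|m IH]; intros x y; [simpl; tauto|].
  rewrite proc_succ_edge. intros [H | (p & c & w & Hc & Hpi & Hxy)]; [now apply IH|].
  destruct (pi_child_lvl _ _ _ _ Hc Hpi) as [_ Lw]. destruct Hc as [[_ Lp] _].
  destruct Hxy as [[-> ->] | [-> ->]]; lia.
Qed.

Lemma proc_edge_sym m x y : gE (G m) x y -> gE (G m) y x.
Proof.
  induction m as [|m IH]; [simpl; tauto|].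
  rewrite !proc_succ_edge. intros [H | (p & c & w & Hc & Hpi & Hxy)]; [left; auto | right].
  exists p, c, w. tauto.
Qed.

Lemma proc_edge_mono m m' x y : m <= m' -> gE (G m) x y -> gE (G m') x y.
Proof. induction 1 as [|m' _ IH]; [auto | intros E; apply proc_succ_edge; left; auto]. Qed.

Lemma proc_vertex_pred m x : gV (G (S m)) x -> length x <= m -> gV (G m) x.
Proof.
  rewrite proc_succ_vertex. intros [H | (u & Hu & Hpi)] L; [exact H|].
  destruct (is_pi_lvl _ _ _ _ Hpi Hu) as [_ Lx]. lia.
Qed.

Lemma proc_edge_pred m x y :
  gE (G (S m)) x y -> length x <= m -> length y <= m -> gE (G m) x y.
Proof.
  rewrite proc_succ_edge. intros [H | (p & c & w & Hc & Hpi & Hxy)] Lx Ly; [exact H|].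
  destruct (pi_child_lvl _ _ _ _ Hc Hpi) as [_ Lw].
  destruct Hxy as [[-> ->] | [-> ->]]; lia.
Qed.

Lemma proc_top_edge m x y :
  gE (G (S m)) x y -> length y = S m ->
  exists c, tilde_child m x c /\ is_pi mu (TG m) (S m) c y.
Proof.
  rewrite proc_succ_edge. intros [H | (p & c & w & Hc & Hpi & Hxy)] Ly.
  - apply proc_edge_vertices, proj2, proc_vertex_length in H. lia.
  - destruct Hxy as [[-> ->] | [-> ->]]; [eauto|].
    destruct Hc as [[_ Lp] _]. lia.
Qed.

Lemma proc_top_vertex_parent m y :
  lvl (G (S m)) (S m) y -> exists g, gE (G (S m)) g y /\ lvl (G m) m g.
Proof.
  intros [Hy Ly]. apply proc_succ_vertex in Hy.
  destruct Hy as [Hy | (u & ([Hu | (p & i & Hp & Hi & ->)] & Lu) & Hpi)].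
  - apply proc_vertex_length in Hy. lia.
  - apply proc_vertex_length in Hu. lia.
  - exists p. split; [|exact Hp].
    apply proc_succ_edge. right. exists p, (p ++ [i]), y.
    split; [split; eauto | auto].
Qed.

Lemma tilde_graded m : graded (gE (TG m)).
Proof.
  intros x y [H | (p & i & Hp & Hi & Hxy)]; [now apply proc_graded in H|].
  destruct Hp as [_ Lp].
  destruct Hxy as [[-> ->] | [-> ->]]; rewrite length_app; simpl; lia.
Qed.

Lemma tilde_edge_sym m x y : gE (TG m) x y -> gE (TG m) y x.
Proof.
  intros [H | (p & i & Hp & Hi & Hxy)]; [left; now apply proc_edge_sym | right].
  exists p, i. tauto.
Qed.

Lemma tilde_top_edge m x y : gE (TG m) x y -> length y = S m -> tilde_child m x y.
Proof.
  intros [H | (p & i & Hp & Hi & Hxy)] Ly.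
  - apply proc_edge_vertices, proj2, proc_vertex_length in H. lia.
  - destruct Hxy as [[-> ->] | [-> ->]]; [split; eauto|].
    destruct Hp as [_ Lp]. lia.
Qed.

Lemma tilde_edge_old m x y :
  gE (TG m) x y -> length x <= m -> length y <= m -> gE (G m) x y.
Proof.
  intros [H | (p & i & (_ & Lp) & _ & Hxy)] Lx Ly; [exact H|].
  destruct Hxy as [[-> ->] | [-> ->]]; rewrite length_app in *; simpl in *; lia.
Qed.

Lemma tilde_grandchild_parent m g h c :
  tilde_child m g c -> tilde_grandchild m h c -> gE (G m) h g.
Proof.
  intros Cg (p & Cp & Ehp).
  rewrite <- (tilde_child_removelast _ _ _ Cg), (tilde_child_removelast _ _ _ Cp).
  exact Ehp.
Qed.

Lemma msim_shape m a b :
  msimG mu (TG m) (S m) a b ->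
  exists g, tilde_grandchild m g a /\ tilde_grandchild m g b /\ S (length g) = m.
Proof.
  intros ((_ & La) & (_ & Lb) & (W & Hmin) & _).
  destruct W as (x1 & E1 & x2 & E2 & x3 & E3 & x4 & E4 & ->).
  pose proof (tilde_top_edge _ _ _ (tilde_edge_sym _ _ _ E1) La) as C1.
  pose proof (tilde_top_edge _ _ _ E4 Lb) as C3.
  assert (L1 : length x1 = m) by apply C1.
  assert (L3 : length x3 = m) by apply C3.
  destruct (tilde_graded _ _ _ E2) as [L2 | L2].
  - exfalso.
    (* x2 would be a common child of x1 and x3, so x1 = x3 and d(a, b) = 2 *)
    assert (x1 = x3) as <-.
    { rewrite <- (tilde_child_removelast _ _ _ (tilde_top_edge _ _ _ E2 ltac:(lia))).
      exact (tilde_child_removelast _ _ _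
               (tilde_top_edge _ _ _ (tilde_edge_sym _ _ _ E3) ltac:(lia))). }
    apply (Hmin 2); [lia|].
    exists x1. split; [exact E1|]. exists b. split; [exact E4 | reflexivity].
  - exists x2. split; [|split; [|lia]].
    + exists x1. split; [exact C1|].
      apply proc_edge_sym, (tilde_edge_old _ _ _ E2); lia.
    + exists x3. split; [exact C3|]. apply (tilde_edge_old _ _ _ E3); lia.
Qed.

Lemma two_parents_merge m w g g' :
  gE (G (S m)) g w -> gE (G (S m)) g' w -> length w = S m -> g <> g' ->
  exists h a b, msimG mu (TG m) (S m) a b /\
    tilde_grandchild m h a /\ tilde_grandchild m h b /\
    gE (G m) h g /\ S (length h) = m.
Proof.
  intros Eg Eg' Lw Hne.
  destruct (proc_top_edge _ _ _ Eg Lw) as (c & Cc & Pc).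
  destruct (proc_top_edge _ _ _ Eg' Lw) as (c' & Cc' & Pc').
  assert (Hcc : c <> c').
  { intros <-. apply Hne.
    rewrite <- (tilde_child_removelast _ _ _ Cc). exact (tilde_child_removelast _ _ _ Cc'). }
  pose proof (rst_trans _ _ _ _ _ (proj1 Pc) (rst_sym _ _ _ _ (proj1 Pc'))) as Hchain.
  destruct (clos_rst_first_step _ _ _ _ Hchain Hcc) as [b [Hcb | Hbc]].
  - destruct (msim_shape _ _ _ Hcb) as (h & Gc & Gb & Lh).
    exists h, c, b.
    exact (conj Hcb (conj Gc (conj Gb (conj (tilde_grandchild_parent _ _ _ _ Cc Gc) Lh)))).
  - destruct (msim_shape _ _ _ Hbc) as (h & Gb & Gc & Lh).
    exists h, b, c.
    exact (conj Hbc (conj Gb (conj Gc (conj (tilde_grandchild_parent _ _ _ _ Cc Gc) Lh)))).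
Qed.

Definition grandparents_in (m : nat) (A : lab -> Prop) (w : lab) : Prop :=
  forall g, gE (G m) g (removelast w) -> S (length g) = m -> A g.

Lemma merge_at_boundary m A g c d :
  tilde_grandchild (S m) g c -> tilde_grandchild (S m) g d -> S (length g) = S m ->
  grandparents_in (S m) A c -> ~ grandparents_in (S m) A d ->
  A g /\ exists h a b, msimG mu (TG m) (S m) a b /\
    tilde_grandchild m h a /\ tilde_grandchild m h b /\
    gE (G m) h g /\ S (length h) = m.
Proof.
  intros (pc & Cc & Ec) (pd & Cd & Ed) Lg Ic Nd.
  assert (Ag : A g).
  { apply Ic; [rewrite (tilde_child_removelast _ _ _ Cc) | ]; assumption. }
  split; [exact Ag|].
  apply not_all_ex_not in Nd. destruct Nd as [g' Nd].
  apply imply_to_and in Nd. destruct Nd as [Eg' Nd].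
  apply imply_to_and in Nd. destruct Nd as [_ Ng'].
  rewrite (tilde_child_removelast _ _ _ Cd) in Eg'.
  apply (two_parents_merge _ pd g g'); [exact Ed | exact Eg' | apply Cd |].
  intros <-. contradiction.
Qed.

Lemma alpha_refl n v : Iset xi delta mu n v -> alpha xi delta mu n 0 v v.
Proof.
  intros Hv. unfold alpha. rewrite Nat.sub_0_r.
  split; [exact Hv|]. split; [reflexivity | intros k Hk; lia].
Qed.

Lemma alpha_step n j v g h :
  length v = n -> alpha xi delta mu n j v g -> gE (G (n - j)) h g ->
  S (length h) = n - j -> alpha xi delta mu n (S j) v h.
Proof.
  intros Lv ((Vg & Lg) & W & _) Ehg Lh. split.
  - split; [|lia].
    assert (Lnj : n - j = S (n - S j)) by lia. rewrite Lnj in Ehg.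
    apply proc_vertex_pred; [exact (proj1 (proc_edge_vertices _ _ _ Ehg)) | lia].
  - apply dist_of_walk; [apply proc_graded | | lia].
    exists g. split; [apply (proc_edge_mono (n - j)); [lia | exact Ehg] | exact W].
Qed.

Lemma atilde_of_walk m j x h :
  1 <= j <= S m -> Iset xi delta mu (S m - j) h -> walk (gE (TG m)) j h x ->
  length x = length h + j -> atilde xi delta mu (S m) x h.
Proof.
  intros Hj Hh W L. right. exists j. split; [exact Hj|]. split; [exact Hh|].
  unfold Gtil. rewrite Nat.sub_succ, Nat.sub_0_r.
  exact (dist_of_walk _ _ _ _ (tilde_graded m) W L).
Qed.

Lemma atilde_of_grandchild k a h :
  tilde_grandchild (S k) h a -> length h = k -> atilde xi delta mu (S (S k)) a h.
Proof.
  intros (p & Cp & Ehp) Lh.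
  apply (atilde_of_walk _ 2); [lia | | |].
  - replace (S (S k) - 2) with k by lia. split; [|exact Lh].
    apply proc_vertex_pred; [exact (proj1 (proc_edge_vertices _ _ _ Ehp)) | lia].
  - exists p. split; [now left|]. exists a. split; [exact (tilde_child_edge _ _ _ Cp) | reflexivity].
  - destruct (tilde_child_lvl _ _ _ Cp) as [_ La]. lia.
Qed.

Lemma atilde_of_great_grandchild k c g h :
  tilde_grandchild (S (S k)) g c -> gE (G (S k)) h g -> length h = k ->
  atilde xi delta mu (S (S (S k))) c h.
Proof.
  intros (p & Cp & Egp) Ehg Lh.
  apply (atilde_of_walk _ 3); [lia | | |].
  - replace (S (S (S k)) - 3) with k by lia. split; [|exact Lh].
    apply proc_vertex_pred; [exact (proj1 (proc_edge_vertices _ _ _ Ehg)) | lia].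
  - exists g. split; [left; apply (proc_edge_mono (S k)); auto|].
    exists p. split; [now left|].
    exists c. split; [exact (tilde_child_edge _ _ _ Cp) | reflexivity].
  - destruct (tilde_child_lvl _ _ _ Cp) as [_ Lc]. lia.
Qed.

Lemma kr_common_child k v y :
  Iset xi delta mu (S (S (S k))) v -> kr_set xi delta mu (S (S (S k))) v y ->
  exists x1 c1 c2, alpha xi delta mu (S (S (S k))) 1 v x1 /\
    tilde_child (S (S k)) x1 c1 /\ tilde_child (S (S k)) y c2 /\
    clos_refl_sym_trans lab (msimG mu (TG (S (S k))) (S (S (S k)))) c1 c2.
Proof.
  intros Hv (Hy & Hdisj & (x1 & E1 & x2 & E2 & x3 & E3 & ->) & _).
  assert (Lv : length v = S (S (S k))) by apply Hv.
  assert (Ly : length y = S (S k)) by apply Hy.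
  assert (L1 : length x1 = S (S k)).
  { destruct (proc_graded _ _ _ E1) as [L | L]; [|lia].
    apply proc_edge_vertices, proj2, proc_vertex_length in E1. lia. }
  assert (A1 : alpha xi delta mu (S (S (S k))) 1 v x1).
  { apply (alpha_step _ 0 v v); [exact Lv | exact (alpha_refl _ _ Hv) | | simpl; lia].
    exact (proc_edge_sym _ _ _ E1). }
  assert (L2 : length x2 = S (S (S k))).
  { destruct (proc_graded _ _ _ E2) as [L | L]; [lia | exfalso].
    apply (Hdisj x2). split.
    - apply (alpha_step _ 0 y y); [exact Ly | exact (alpha_refl _ _ Hy) | | simpl; lia].
      apply (proc_edge_pred _ _ _ E3); lia.
    - apply (alpha_step _ 1 v x1); [exact Lv | exact A1 | | simpl; lia].
      apply proc_edge_sym, (proc_edge_pred _ _ _ E2); lia. }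
  destruct (proc_top_edge _ _ _ E2 L2) as (c1 & C1 & P1).
  destruct (proc_top_edge _ _ _ (proc_edge_sym _ _ _ E3) L2) as (c2 & C2 & P2).
  exists x1, c1, c2. split; [exact A1|]. split; [exact C1|]. split; [exact C2|].
  exact (rst_trans _ _ _ _ _ (proj1 P1) (rst_sym _ _ _ _ (proj1 P2))).
Qed.

Lemma kr_merge k v y :
  Iset xi delta mu (S (S (S k))) v -> kr_set xi delta mu (S (S (S k))) v y ->
  exists c d g h a b,
    msimG mu (TG (S (S k))) (S (S (S k))) c d /\
    tilde_grandchild (S (S k)) g c /\ tilde_grandchild (S (S k)) g d /\
    alpha xi delta mu (S (S (S k))) 2 v g /\
    msimG mu (TG (S k)) (S (S k)) a b /\
    tilde_grandchild (S k) h a /\ tilde_grandchild (S k) h b /\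
    gE (G (S k)) h g /\ length h = k.
Proof.
  intros Hv Hkr. pose proof Hkr as (Hy & Hdisj & _).
  destruct (kr_common_child _ _ _ Hv Hkr) as (x1 & c1 & c2 & A1 & C1 & C2 & Hchain).
  set (I := grandparents_in (S (S k)) (alpha xi delta mu (S (S (S k))) 2 v)).
  assert (I1 : I c1).
  { intros g Eg Lg. rewrite (tilde_child_removelast _ _ _ C1) in Eg.
    apply (alpha_step _ 1 v x1); [apply Hv | exact A1 | exact Eg | exact Lg]. }
  assert (N2 : ~ I c2).
  { intros I2. destruct (proc_top_vertex_parent _ _ Hy) as (g & Eg & Vg & Lg).
    apply (Hdisj g). split.
    - apply (alpha_step _ 0 y y); [apply Hy | exact (alpha_refl _ _ Hy) | exact Eg | simpl; lia].
    - apply I2; [rewrite (tilde_child_removelast _ _ _ C2); exact Eg | lia]. }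
  destruct (clos_rst_crossing _ _ _ _ _ Hchain I1 N2) as (c & d & Hcd & Hcross).
  destruct (msim_shape _ _ _ Hcd) as (g & Gc & Gd & Lg).
  assert (Hmerge : alpha xi delta mu (S (S (S k))) 2 v g /\
    exists h a b, msimG mu (TG (S k)) (S (S k)) a b /\
      tilde_grandchild (S k) h a /\ tilde_grandchild (S k) h b /\
      gE (G (S k)) h g /\ S (length h) = S k).
  { destruct Hcross as [[Ic Nd] | [Id Nc]].
    - exact (merge_at_boundary _ _ _ _ _ Gc Gd Lg Ic Nd).
    - exact (merge_at_boundary _ _ _ _ _ Gd Gc Lg Id Nc). }
  destruct Hmerge as (Ag & h & a & b & Hab & Ga & Gb & Ehg & Lh).
  exists c, d, g, h, a, b. repeat (split; [eassumption|]). lia.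
Qed.

End Process.

Theorem lemma6p2 (p q : R) (hp : (0 <= p <= 1)%R) (hq : (0 <= q <= 1)%R)
  (xi : lab -> nat) (delta : lab -> lab -> bool) (mu : lab -> lab -> bool)
  (hmu : forall u v, mu u v = mu v u)
  (n : nat) (hn : 3 <= n) (v : lab) (hv : Iset xi delta mu n v)
  (hk : exists y, kr_set xi delta mu n v y) :
  exists u, alpha xi delta mu n 3 v u /\
    exists a b c d,
      msim xi delta mu n c d /\
      atilde xi delta mu n c u /\ atilde xi delta mu n d u /\
      ((Itil xi delta mu n a /\ Itil xi delta mu n b /\
        Itil xi delta mu n c /\ Itil xi delta mu n d /\
        msim xi delta mu n a b /\
        atilde xi delta mu n a u /\ atilde xi delta mu n b u /\
        a <> b /\ a <> d /\ b <> d)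
       \/
       (Itil xi delta mu (n - 1) a /\ Itil xi delta mu (n - 1) b /\
        Itil xi delta mu n c /\ Itil xi delta mu n d /\
        msim xi delta mu (n - 1) a b /\
        atilde xi delta mu (n - 1) a u /\ atilde xi delta mu (n - 1) b u)).
Proof.
  destruct n as [| [| [| k]]]; try lia.
  destruct hk as [y Hkr].
  destruct (kr_merge _ _ _ _ _ _ hv Hkr)
    as (c & d & g & h & a & b & Hcd & Gc & Gd & Ag & Hab & Ga & Gb & Ehg & Lh).
  exists h. split.
  { apply (alpha_step _ _ _ _ 2 v g); [apply hv | exact Ag | exact Ehg | simpl; lia]. }
  exists a, b, c, d.
  split; [exact Hcd|].
  split; [exact (atilde_of_great_grandchild _ _ _ _ _ _ _ Gc Ehg Lh)|].
  split; [exact (atilde_of_great_grandchild _ _ _ _ _ _ _ Gd Ehg Lh)|].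
  right.
  split; [apply Hab|]. split; [apply Hab|]. split; [apply Hcd|]. split; [apply Hcd|].
  split; [exact Hab|].
  split; [exact (atilde_of_grandchild _ _ _ _ _ _ Ga Lh) | exact (atilde_of_grandchild _ _ _ _ _ _ Gb Lh)].
Qed.
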